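(* Let $G$ be a maximal outerplanar graph and $\widetilde{G}$ its reduced graph. In every $B_1$-EPG representation of $G$ (if there is any), the paths corresponding to the three vertices of any triangle in $\widetilde{G}$ form a claw clique.
   Context: A graph is maximal outerplanar if it is outerplanar and adding any single new edge yields a non-outerplanar graph. $S_3$ is the graph with vertices $x_1,x_2,x_3,y_1,y_2,y_3$ and edges $\{x_1,x_2\},\{x_1,x_3\},\{x_2,x_3\},\{x_1,y_1\},\{x_2,y_1\},\{x_2,y_2\},\{x_3,y_2\},\{x_3,y_3\},\{x_1,y_3\}$; its central vertices are $x_1,x_2,x_3$ and its central edges are the three edges among them. A copy of $S_3$ in $G$ is an induced subgraph isomorphic to $S_3$. The reduced graph $\widetilde{G}$ is obtained by coloring, for every copy of $S_3$ in $G$, its central vertices and central edges, and then deleting from $G$ all uncolored vertices and uncolored edges. An EPG representation of a graph is a set of paths on a rectangular grid (sequences of grid points joined consecutively by grid edges), one per vertex, such that two vertices are adjacent iff their paths share a grid edge; it is a $B_1$-EPG representation if every path has at most one bend (point where a horizontal and a vertical grid edge of the path meet). A claw in the grid is a grid point together with three of the grid edges incident to it; a claw clique is the set of all paths that use two of the three edges of some such claw. *)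

From mathcomp Require Import all_boot all_order all_algebra.
Set Implicit Arguments. Unset Strict Implicit. Unset Printing Implicit Defensive.

Definition simple_graph (T : finType) (e : rel T) : Prop :=
  symmetric e /\ irreflexive e.

Definition add_edge (T : finType) (e : rel T) (u v : T) : rel T :=
  fun x y => [|| e x y, (x == u) && (y == v) | (x == v) && (y == u)].

(* Outerplanar: vertices can be placed (injectively) in cyclic order on a circle
   so that no two edges, drawn as chords, cross; i.e. there are no edges ab, cd
   with pos a < pos c < pos b < pos d. *)
Definition outerplanar (T : finType) (e : rel T) : Prop :=
  exists pos : T -> nat, injective pos /\
    forall a b c d : T, e a b -> e c d ->
      ~~ [&& pos a < pos c, pos c < pos b & pos b < pos d].

Definition maximal_outerplanar (T : finType) (e : rel T) : Prop :=
  outerplanar e /\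
  forall u v : T, u != v -> ~~ e u v -> ~ outerplanar (add_edge e u v).

(* ---------- The graph S_3 on vertex set 'I_6 ----------
   0,1,2 = x_1,x_2,x_3 (central);  3,4,5 = y_1,y_2,y_3. *)
Definition S3_edges : seq (nat * nat) :=
  [:: (0,1); (0,2); (1,2); (0,3); (1,3); (1,4); (2,4); (2,5); (0,5)]%N.

Definition S3adj (i j : 'I_6) : bool :=
  ((nat_of_ord i, nat_of_ord j) \in S3_edges) ||
  ((nat_of_ord j, nat_of_ord i) \in S3_edges).

Definition S3_copy (T : finType) (e : rel T) (f : 'I_6 -> T) : Prop :=
  injective f /\ forall i j : 'I_6, e (f i) (f j) = S3adj i j.

Definition reduced_edge (T : finType) (e : rel T) (u v : T) : Prop :=
  exists (f : 'I_6 -> T) (i j : 'I_6),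
    S3_copy e f /\ [/\ (i < 3)%N, (j < 3)%N, i != j, f i = u & f j = v].

Definition reduced_vertex (T : finType) (e : rel T) (u : T) : Prop :=
  exists (f : 'I_6 -> T) (i : 'I_6), [/\ S3_copy e f, (i < 3)%N & f i = u].

Definition reduced_triangle (T : finType) (e : rel T) (u v w : T) : Prop :=
  [&& u != v, v != w & u != w] /\
  [/\ reduced_edge e u v, reduced_edge e v w & reduced_edge e u w].

Definition point := (int * int)%type.

Definition grid_adj (p q : point) : bool :=
  (absz (p.1 - q.1)%R + absz (p.2 - q.2)%R == 1)%N.

Definition grid_path (P : seq point) : bool :=
  [&& (1 < size P)%N, uniq P & all (fun pq => grid_adj pq.1 pq.2) (zip P (behead P))].

Definition uses_edge (P : seq point) (p q : point) : bool :=
  ((p, q) \in zip P (behead P)) || ((q, p) \in zip P (behead P)).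

Definition horizontal (p q : point) : bool := p.2 == q.2.

Definition bends (P : seq point) : nat :=
  count (fun t : point * (point * point) =>
           horizontal t.1 t.2.1 != horizontal t.2.1 t.2.2)
        (zip P (zip (behead P) (behead (behead P)))).

Definition B1_EPG_rep (T : finType) (e : rel T) (rep : T -> seq point) : Prop :=
  (forall v, grid_path (rep v) /\ (bends (rep v) <= 1)%N) /\
  (forall u v, u != v ->
     (e u v <-> exists p q : point, uses_edge (rep u) p q && uses_edge (rep v) p q)).

(* A claw: center c together with the three grid edges at c other than {c,m},
   where m is a grid neighbour of c. P uses two of the three edges of this claw. *)
Definition uses_two_claw_edges (c m : point) (P : seq point) : Prop :=
  exists q1 q2 : point,
    [&& q1 != q2, grid_adj c q1, grid_adj c q2, q1 != m, q2 != m,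
        uses_edge P c q1 & uses_edge P c q2].

Definition claw_clique3 (P1 P2 P3 : seq point) : Prop :=
  exists c m : point, grid_adj c m /\
    [/\ uses_two_claw_edges c m P1, uses_two_claw_edges c m P2 &
        uses_two_claw_edges c m P3].

(* Let [uvw] be a triangle of the reduced graph. Each of its edges, say [uv], lies in a copy
   of [S_3], which provides an ear [y] of [uv]: a private neighbour, adjacent to [u] and [v]
   but not to [w]. The three ears are pairwise non-adjacent, for otherwise the graph
   would contain [K_{1,1,3}] or the wheel [W_4], which are not outerplanar.
   In a [B_1]-EPG representation, three pairwise intersecting paths either share a grid
   edge or form a claw clique. If the paths of [u], [v], [w] shared a grid edge [E], each
   ear would meet its two paths on one side of [E], so two of them would do
   so on the same side; comparing where the three paths through [E] turn off then shows
   that one of these two paths meets a path it has to avoid. *)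

From mathcomp Require Import all_boot all_order all_algebra.
From mathcomp Require Import zify.
Set Implicit Arguments. Unset Strict Implicit. Unset Printing Implicit Defensive.

(** * Outerplanar obstructions *)

Definition crossing (pos : nat -> nat) (E : seq (nat * nat)) : bool :=
  has (fun ab => has (fun cd =>
    [&& pos ab.1 < pos cd.1, pos cd.1 < pos ab.2 & pos ab.2 < pos cd.2]) E) E.

Definition sym_pairs (E : seq (nat * nat)) : seq (nat * nat) :=
  E ++ map (fun ab => (ab.2, ab.1)) E.

Lemma count_leq_split (f : nat -> nat) x s :
  count (fun j => f j <= x) s = count (fun j => f j < x) s + count (fun j => f j == x) s.
Proof.
elim: s => //= j s ->.
by case: (ltngtP (f j) x) => h /=; rewrite ?add0n ?add1n ?addSn ?addnS.
Qed.

Section CrossingOrders.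
Variables (n : nat) (pos : nat -> nat) (E : seq (nat * nat)).
Hypothesis pos_inj : forall i j, i < n -> j < n -> pos i = pos j -> i = j.
Hypothesis E_range : all (fun ab => (ab.1 < n) && (ab.2 < n)) E.

Let rank i := count (fun j => pos j < pos i) (iota 0 n).

Let ltn_rank a b : a < n -> b < n -> (pos a < pos b) = (rank a < rank b).
Proof.
move=> ha hb; case: (ltnP (pos a) (pos b)) => h; apply/esym.
  apply: (@leq_trans (count (fun j => pos j <= pos a) (iota 0 n))).
    rewrite (count_leq_split pos (pos a)) -[X in X < _]addn0 ltn_add2l -has_count.
    by apply/hasP; exists a; rewrite ?mem_iota /=.
  by apply: sub_count => j /= hj; apply: leq_ltn_trans h.
apply/negbTE; rewrite -leqNgt.
by apply: sub_count => j /= hj; apply: leq_trans h.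
Qed.

Let rank_lt i : i < n -> rank i < n.
Proof.
move=> hi; have := count_predC (fun j => pos j < pos i) (iota 0 n).
rewrite size_iota => <-; rewrite -[X in X < _]addn0 ltn_add2l -has_count.
by apply/hasP; exists i; rewrite ?mem_iota //= ltnn.
Qed.

Let rank_inj a b : a < n -> b < n -> rank a = rank b -> a = b.
Proof.
move=> ha hb hr; apply: pos_inj => //.
by case: (ltngtP (pos a) (pos b)); rewrite // ltn_rank // hr ltnn.
Qed.

(* The ranks of [pos] on [0, n) form a permutation inducing the same order. *)
Lemma crossing_of_orders :
  all (fun s => crossing (nth 0 s) E) (permutations (iota 0 n)) -> crossing pos E.
Proof.
move=> all_cross; set rs := map rank (iota 0 n).
have nth_rs i : i < n -> nth 0 rs i = rank i.
  by move=> hi; rewrite (nth_map 0) ?size_iota // nth_iota.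
have rs_perm : rs \in permutations (iota 0 n).
  have urs : uniq rs.
    rewrite map_inj_in_uniq ?iota_uniq // => a b.
    by rewrite !mem_iota /= !add0n; apply: rank_inj.
  have srs : {subset rs <= iota 0 n}.
    by move=> x /mapP [i]; rewrite !mem_iota /= !add0n => hi ->; apply: rank_lt.
  have [_ eq_rs] := uniq_min_size urs srs (eq_leq (esym (size_map _ _))).
  by rewrite mem_permutations uniq_perm ?iota_uniq.
rewrite /crossing -(eq_in_has (a1 := fun ab => has (fun cd =>
   [&& nth 0 rs ab.1 < nth 0 rs cd.1, nth 0 rs cd.1 < nth 0 rs ab.2
     & nth 0 rs ab.2 < nth 0 rs cd.2]) E)); first exact: (allP all_cross).
move=> ab abE /=; apply: eq_in_has => cd cdE /=.
move: (allP E_range ab abE) (allP E_range cd cdE) => /andP [a1 a2] /andP [c1 c2].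
by rewrite !nth_rs // -!ltn_rank.
Qed.

End CrossingOrders.

Definition K113_edges : seq (nat * nat) :=
  sym_pairs [:: (0, 1); (0, 2); (0, 3); (0, 4); (1, 2); (1, 3); (1, 4)].

Definition W4_edges : seq (nat * nat) :=
  sym_pairs [:: (0, 1); (0, 2); (0, 3); (0, 4); (1, 2); (2, 3); (3, 4); (4, 1)].

Lemma K113_crossing : all (fun s => crossing (nth 0 s) K113_edges) (permutations (iota 0 5)).
Proof. by vm_compute. Qed.

Lemma W4_crossing : all (fun s => crossing (nth 0 s) W4_edges) (permutations (iota 0 5)).
Proof. by vm_compute. Qed.

Section Outerplanar.
Variables (T : finType) (e : rel T).
Hypotheses (e_sym : symmetric e) (e_outer : outerplanar e).

Lemma outerplanar_no_pattern n (t : nat -> T) (E : seq (nat * nat)) :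
  (forall i j, i < n -> j < n -> t i = t j -> i = j) ->
  all (fun ab => (ab.1 < n) && (ab.2 < n)) E ->
  all (fun ab => e (t ab.1) (t ab.2)) E ->
  all (fun s => crossing (nth 0 s) E) (permutations (iota 0 n)) -> False.
Proof.
case: e_outer => pos [pos_inj noncross] t_inj E_range E_edges all_cross.
have /hasP [ab abE /hasP [cd cdE cross]] := crossing_of_orders
  (pos := fun i => pos (t i)) (fun i j hi hj h => t_inj i j hi hj (pos_inj _ _ h))
  E_range all_cross.
by move: (noncross _ _ _ _ (allP E_edges ab abE) (allP E_edges cd cdE)); rewrite cross.
Qed.

Let outerplanar_no_5pattern (a0 a1 a2 a3 a4 : T) E :
  uniq [:: a0; a1; a2; a3; a4] ->
  all (fun ab => (ab.1 < 5) && (ab.2 < 5)) E ->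
  all (fun ab => e (nth a0 [:: a0; a1; a2; a3; a4] ab.1) (nth a0 [:: a0; a1; a2; a3; a4] ab.2)) E ->
  all (fun s => crossing (nth 0 s) E) (permutations (iota 0 5)) -> False.
Proof.
move=> a_uniq; apply: outerplanar_no_pattern => i j hi hj /eqP.
by rewrite nth_uniq // => /eqP.
Qed.

Lemma outerplanar_noK113 (a0 a1 a2 a3 a4 : T) : uniq [:: a0; a1; a2; a3; a4] ->
  e a0 a1 -> e a0 a2 -> e a0 a3 -> e a0 a4 -> e a1 a2 -> e a1 a3 -> e a1 a4 -> False.
Proof.
move=> a_uniq *; apply: (outerplanar_no_5pattern (E := K113_edges) a_uniq isT _ K113_crossing).
by rewrite /=; repeat (apply/andP; split) => //; rewrite e_sym.
Qed.

Lemma outerplanar_noW4 (h r1 r2 r3 r4 : T) : uniq [:: h; r1; r2; r3; r4] ->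
  e h r1 -> e h r2 -> e h r3 -> e h r4 -> e r1 r2 -> e r2 r3 -> e r3 r4 -> e r4 r1 -> False.
Proof.
move=> r_uniq *; apply: (outerplanar_no_5pattern (E := W4_edges) r_uniq isT _ W4_crossing).
by rewrite /=; repeat (apply/andP; split) => //; rewrite e_sym.
Qed.
End Outerplanar.

Lemma S3adj_central (i j : 'I_6) : i < 3 -> j < 3 -> i != j -> S3adj i j.
Proof. by case: i => [[|[|[|i]]] hi] //; case: j => [[|[|[|j]]] hj]. Qed.

Lemma S3_central_pair (i j : 'I_6) : i < 3 -> j < 3 -> i != j ->
  exists k y : 'I_6, [/\ k < 3, k != i, k != j, y != k &
    [/\ S3adj y i, S3adj y j & ~~ S3adj y k]].
Proof.
case: i => [[|[|[|i]]] hi] //; case: j => [[|[|[|j]]] hj] // _ _ ij.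
- by exists (Ordinal (isT : 2 < 6)), (Ordinal (isT : 3 < 6)).
- by exists (Ordinal (isT : 1 < 6)), (Ordinal (isT : 5 < 6)).
- by exists (Ordinal (isT : 2 < 6)), (Ordinal (isT : 3 < 6)).
- by exists (Ordinal (isT : 0 < 6)), (Ordinal (isT : 4 < 6)).
- by exists (Ordinal (isT : 1 < 6)), (Ordinal (isT : 5 < 6)).
- by exists (Ordinal (isT : 0 < 6)), (Ordinal (isT : 4 < 6)).
Qed.

Lemma reduced_edge_adj (T : finType) (e : rel T) u v : reduced_edge e u v -> e u v.
Proof.
case=> f [i [j [[_ f_adj] [i3 j3 ij <- <-]]]].
by rewrite f_adj S3adj_central.
Qed.

Definition private_nbr (T : finType) (e : rel T) (y u v w : T) : Prop :=
  [/\ e y u, e y v, ~~ e y w & y != w].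

Lemma private_nbr_swap (T : finType) (e : rel T) y u v w :
  private_nbr e y u v w -> private_nbr e y v u w.
Proof. by case. Qed.

Definition ear_triangle (T : finType) (e : rel T) (u v w y1 y2 y3 : T) : Prop :=
  [/\ [/\ e u v, e v w & e u w], private_nbr e y1 u v w, private_nbr e y2 v w u,
      private_nbr e y3 u w v & [&& ~~ e y1 y2, ~~ e y1 y3 & ~~ e y2 y3]].

Section ReducedTriangle.
Variables (T : finType) (e : rel T).
Hypotheses (e_sym : symmetric e) (e_irr : irreflexive e) (e_outer : outerplanar e).

Let adj_neq a b : e a b -> a != b.
Proof. by apply: contraTneq => ->; rewrite e_irr. Qed.

(* [y] is the outer vertex of the copy of [S_3] adjacent to [u] and [v], unless that
   vertex is [w]; then the third central vertex of the copy will do, since otherwise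
   [u], [v] and three common neighbours would span a [K_{1,1,3}]. *)
Lemma reduced_edge_private_nbr u v w :
  reduced_edge e u v -> e u w -> e v w -> exists y, private_nbr e y u v w.
Proof.
case=> f [i [j [[f_inj f_adj] [i3 j3 ij <- <-]]]] eiw ejw.
have [k [y [k3 ki kj yk [yi yj yk']]]] := S3_central_pair i3 j3 ij.
have f_neq a b : a != b -> f a != f b by rewrite (inj_eq f_inj).
have [<-|kw] := eqVneq (f k) w.
  by exists (f y); split; rewrite ?f_adj ?f_neq.
have [<-|yw] := eqVneq (f y) w.
  exists (f k); split.
  - by rewrite f_adj S3adj_central.
  - by rewrite f_adj S3adj_central.
  - by rewrite e_sym f_adj.
  - by rewrite f_neq // eq_sym.
have yi' : y != i by rewrite -(inj_eq f_inj) adj_neq ?f_adj.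
have yj' : y != j by rewrite -(inj_eq f_inj) adj_neq ?f_adj.
exfalso; apply: (outerplanar_noK113 e_sym e_outer
  (a0 := f i) (a1 := f j) (a2 := f k) (a3 := f y) (a4 := w)).
- rewrite /= !inE !negb_or !(inj_eq f_inj) ij (eq_sym i) ki (eq_sym i) yi'.
  by rewrite (eq_sym j) kj (eq_sym j) yj' (eq_sym k) yk kw yw !adj_neq.
- by rewrite f_adj S3adj_central.
- by rewrite f_adj S3adj_central // eq_sym.
- by rewrite e_sym f_adj.
- by [].
- by rewrite f_adj S3adj_central // eq_sym.
- by rewrite e_sym f_adj.
- by [].
Qed.

(* An edge [p q] would close the wheel with hub [b] and rim [a c q p]. *)
Lemma private_nbrs_nonadj a b c p q : e a b -> e b c -> e a c ->
  private_nbr e p a b c -> private_nbr e q b c a -> ~~ e p q.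
Proof.
move=> eab ebc eac [epa epb npc pc] [eqb eqc nqa qa]; apply/negP => epq.
apply: (outerplanar_noW4 e_sym e_outer (h := b) (r1 := a) (r2 := c) (r3 := q) (r4 := p)).
- have qp : q != p by apply: contraNneq npc => <-.
  have nbr_neq x y : e x y -> y != x by rewrite e_sym; apply: adj_neq.
  rewrite /= !inE !negb_or (nbr_neq _ _ eab) adj_neq // (nbr_neq _ _ eqb).
  rewrite (nbr_neq _ _ epb) adj_neq // eq_sym qa (nbr_neq _ _ epa).
  by rewrite (nbr_neq _ _ eqc) eq_sym pc qp.
all: by rewrite // e_sym.
Qed.

Lemma reduced_triangle_ears u v w :
  reduced_triangle e u v w -> exists y1 y2 y3, ear_triangle e u v w y1 y2 y3.
Proof.
case=> _ [ruv rvw ruw].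
have [euv evw euw] := And3 (reduced_edge_adj ruv) (reduced_edge_adj rvw) (reduced_edge_adj ruw).
have evu : e v u by rewrite e_sym.
have ewu : e w u by rewrite e_sym.
have ewv : e w v by rewrite e_sym.
have [y1 p1] := reduced_edge_private_nbr ruv euw evw.
have [y2 p2] := reduced_edge_private_nbr rvw evu ewu.
have [y3 p3] := reduced_edge_private_nbr ruw euv ewv.
exists y1, y2, y3; split => //.
rewrite (private_nbrs_nonadj euv evw euw p1 p2).
rewrite (private_nbrs_nonadj evu euw evw (private_nbr_swap p1) p3).
by rewrite (private_nbrs_nonadj evw ewu evu p2 (private_nbr_swap p3)).
Qed.
End ReducedTriangle.

(** * Paths with one bend *)

Import Order.TTheory.
Local Open Scope ring_scope.

(* A path with at most one bend: the horizontal unit edges [(x, hrow), (x + 1, hrow)]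
   for [hlo <= x < hhi] together with the vertical unit edges [(vcol, y), (vcol, y + 1)]
   for [vlo <= y < vhi]; either segment may be empty. *)
Record bpath := BPath { hrow : int; hlo : int; hhi : int; vcol : int; vlo : int; vhi : int }.

Definition bpath_wf (P : bpath) : Prop :=
  hlo P < hhi P -> vlo P < vhi P ->
  (vcol P = hlo P \/ vcol P = hhi P) /\ (hrow P = vlo P \/ hrow P = vhi P).

Definition has_hedge (P : bpath) (x y : int) : Prop := y = hrow P /\ hlo P <= x < hhi P.
Definition has_vedge (P : bpath) (x y : int) : Prop := x = vcol P /\ vlo P <= y < vhi P.

(* [o] tells whether the unit edge with lower-left end [(x, y)] is horizontal. *)
Definition has_edge (P : bpath) (o : bool) (x y : int) : Prop :=
  if o then has_hedge P x y else has_vedge P x y.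

Definition share_edge (P Q : bpath) : Prop :=
  exists o x y, has_edge P o x y /\ has_edge Q o x y.

Definition edge_disjoint (P Q : bpath) : Prop :=
  forall o x y, has_edge P o x y -> ~ has_edge Q o x y.

Definition common_edge (P1 P2 P3 : bpath) : Prop :=
  exists o x y, [/\ has_edge P1 o x y, has_edge P2 o x y & has_edge P3 o x y].

Inductive dir := East | West | North | South.

Definition step (p : point) (d : dir) : point :=
  match d with
  | East => (p.1 + 1, p.2) | West => (p.1 - 1, p.2)
  | North => (p.1, p.2 + 1) | South => (p.1, p.2 - 1)
  end.

Definition dir_horizontal (d : dir) : bool :=
  match d with East | West => true | North | South => false end.

(* Lower-left end of the unit edge from [c] in direction [d]. *)
Definition dir_x (c : point) (d : dir) : int := if d is West then c.1 - 1 else c.1.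
Definition dir_y (c : point) (d : dir) : int := if d is South then c.2 - 1 else c.2.

Definition uses_dir (P : bpath) (c : point) (d : dir) : Prop :=
  has_edge P (dir_horizontal d) (dir_x c d) (dir_y c d).

Definition claw_member (P : bpath) (c : point) (m : dir) : Prop :=
  exists d1 d2, [/\ d1 <> d2, d1 <> m, d2 <> m, uses_dir P c d1 & uses_dir P c d2].

Definition claw3 (P1 P2 P3 : bpath) : Prop :=
  exists c m, [/\ claw_member P1 c m, claw_member P2 c m & claw_member P3 c m].

Definition common_or_claw (P1 P2 P3 : bpath) : Prop :=
  common_edge P1 P2 P3 \/ claw3 P1 P2 P3.

Lemma common_or_claw_swap P1 P2 P3 : common_or_claw P1 P2 P3 -> common_or_claw P2 P1 P3.
Proof.
case=> [[o [x [y [h1 h2 h3]]]]|[c [m [h1 h2 h3]]]]; [left|right].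
  by exists o, x, y.
by exists c, m.
Qed.

Lemma common_or_claw_rot P1 P2 P3 : common_or_claw P1 P2 P3 -> common_or_claw P2 P3 P1.
Proof.
case=> [[o [x [y [h1 h2 h3]]]]|[c [m [h1 h2 h3]]]]; [left|right].
  by exists o, x, y.
by exists c, m.
Qed.

Definition transpose (P : bpath) : bpath :=
  BPath (vcol P) (vlo P) (vhi P) (hrow P) (hlo P) (hhi P).

Definition swap_xy (p : point) : point := (p.2, p.1).

Definition dir_transpose (d : dir) : dir :=
  match d with East => North | North => East | West => South | South => West end.

Lemma has_edge_transpose P o x y : has_edge (transpose P) o x y <-> has_edge P (~~ o) y x.
Proof. by case: o. Qed.

Lemma bpath_wf_transpose P : bpath_wf P -> bpath_wf (transpose P).
Proof. by move=> wf /= h h'; have [] := wf h' h; tauto. Qed.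

Lemma share_edge_transpose P Q : share_edge P Q -> share_edge (transpose P) (transpose Q).
Proof. by move=> [o [x [y [h h']]]]; exists (~~ o), y, x; rewrite !has_edge_transpose negbK. Qed.

Lemma edge_disjoint_transpose P Q :
  edge_disjoint P Q -> edge_disjoint (transpose P) (transpose Q).
Proof. by move=> PQ o x y; rewrite !has_edge_transpose; apply: PQ. Qed.

Lemma uses_dir_transpose P c d :
  uses_dir (transpose P) c d -> uses_dir P (swap_xy c) (dir_transpose d).
Proof. by case: d. Qed.

Lemma claw_member_transpose P c m :
  claw_member (transpose P) c m -> claw_member P (swap_xy c) (dir_transpose m).
Proof.
have tr_inj : injective dir_transpose by do 2 case.
case=> d1 [d2 [d12 d1m d2m u1 u2]].
exists (dir_transpose d1), (dir_transpose d2).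
by split; [move/tr_inj | move/tr_inj | move/tr_inj | apply: uses_dir_transpose..].
Qed.

Lemma common_or_claw_transpose P1 P2 P3 :
  common_or_claw (transpose P1) (transpose P2) (transpose P3) -> common_or_claw P1 P2 P3.
Proof.
case=> [[o [x [y [h1 h2 h3]]]]|[c [m [h1 h2 h3]]]]; [left|right].
  by exists (~~ o), y, x; split; apply/has_edge_transpose.
by exists (swap_xy c), (dir_transpose m); split; apply: claw_member_transpose.
Qed.

Lemma interval_helly3 (a1 b1 a2 b2 a3 b3 : int) :
  a1 < b1 -> a2 < b2 -> a3 < b3 -> a1 < b2 -> a2 < b1 -> a1 < b3 -> a3 < b1 -> a2 < b3 -> a3 < b2 ->
  exists x, [/\ a1 <= x < b1, a2 <= x < b2 & a3 <= x < b3].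
Proof.
by move=> *; exists (Num.max a1 (Num.max a2 a3)); split; lia.
Qed.

(* If the horizontal segments of [P2] and [P3] overlap, the three of them have a common
   edge; otherwise [P2] and [P3] turn at a common corner, the centre of the claw. *)
Lemma hshare_common_or_claw P1 P2 P3 x12 y12 x13 y13 :
  bpath_wf P2 -> bpath_wf P3 ->
  has_hedge P1 x12 y12 -> has_hedge P2 x12 y12 -> has_hedge P1 x13 y13 -> has_hedge P3 x13 y13 ->
  share_edge P2 P3 -> common_or_claw P1 P2 P3.
Proof.
rewrite /has_hedge => wf2 wf3 h12 h21 h13 h31 s23.
have [overlap|apart] :
    (hlo P2 < hhi P3 /\ hlo P3 < hhi P2) \/ ~ (hlo P2 < hhi P3 /\ hlo P3 < hhi P2) by lia.
  have [z [? ? ?]] := @interval_helly3 (hlo P1) (hhi P1) (hlo P2) (hhi P2)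
    (hlo P3) (hhi P3) ltac:(lia) ltac:(lia) ltac:(lia) ltac:(lia) ltac:(lia) ltac:(lia)
    ltac:(lia) ltac:(lia) ltac:(lia).
  by left; exists true, z, (hrow P1); split; split; lia.
case: s23 => -[] [x [y []]] /=; rewrite /has_hedge /has_vedge => v23 v32; first by lia.
have [c2 c2'] := wf2 ltac:(lia) ltac:(lia).
have [c3 c3'] := wf3 ltac:(lia) ltac:(lia).
right; exists (vcol P2, hrow P1).
have [up|down] : vlo P2 = hrow P1 \/ vhi P2 = hrow P1 by lia.
all: have [left2|right2] : vcol P2 = hhi P2 \/ vcol P2 = hlo P2 by lia.
- by exists South; split; [exists East, West | exists West, North | exists East, North];
    split=> //; rewrite /uses_dir /= /has_hedge /has_vedge /=; lia.
- by exists South; split; [exists East, West | exists East, North | exists West, North];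
    split=> //; rewrite /uses_dir /= /has_hedge /has_vedge /=; lia.
- by exists North; split; [exists East, West | exists West, South | exists East, South];
    split=> //; rewrite /uses_dir /= /has_hedge /has_vedge /=; lia.
- by exists North; split; [exists East, West | exists East, South | exists West, South];
    split=> //; rewrite /uses_dir /= /has_hedge /has_vedge /=; lia.
Qed.

Lemma pairwise_share_common_or_claw P1 P2 P3 :
  bpath_wf P1 -> bpath_wf P2 -> bpath_wf P3 ->
  share_edge P1 P2 -> share_edge P1 P3 -> share_edge P2 P3 -> common_or_claw P1 P2 P3.
Proof.
move=> w1 w2 w3 s12 s13 s23.
have [t1 t2 t3] := And3 (bpath_wf_transpose w1) (bpath_wf_transpose w2) (bpath_wf_transpose w3).
move: (s12) (s13) => [[] [x12 [y12 [h12 h21]]]] [[] [x13 [y13 [h13 h31]]]].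
- exact: hshare_common_or_claw h12 h21 h13 h31 s23.
- case: (s23) => -[] [x23 [y23 [h23 h32]]].
  + by apply/common_or_claw_swap/(hshare_common_or_claw w1 w3 h21 h12 h23 h32).
  + apply/common_or_claw_transpose/common_or_claw_rot.
    exact: (hshare_common_or_claw (P1 := transpose P3) t1 t2 h31 h13 h32 h23
      (share_edge_transpose s12)).
- case: (s23) => -[] [x23 [y23 [h23 h32]]].
  + by apply/common_or_claw_rot/(hshare_common_or_claw w1 w2 h31 h13 h32 h23).
  + apply/common_or_claw_transpose/common_or_claw_swap.
    exact: (hshare_common_or_claw (P1 := transpose P2) t1 t3 h21 h12 h23 h32
      (share_edge_transpose s13)).
- apply/common_or_claw_transpose.
  exact: (hshare_common_or_claw (P1 := transpose P1) t2 t3 h12 h21 h13 h31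
    (share_edge_transpose s23)).
Qed.

Definition share_right_of (x0 : int) (Q P : bpath) : Prop :=
  exists o x y, [/\ x0 < x, has_edge Q o x y & has_edge P o x y].

(* Right of [x0], the horizontal edges of [P] are edges of [R]; so [Q] meets [P] on its
   vertical segment, which then hangs from the right end of the horizontal one. *)
Lemma share_right_vedge P R Q x0 y0 o x y :
  bpath_wf P -> has_hedge P x0 y0 -> has_hedge R x0 y0 -> hhi P <= hhi R ->
  edge_disjoint Q R -> x0 < x -> has_edge Q o x y -> has_edge P o x y ->
  [/\ o = false, x = hhi P, vcol P = hhi P & vlo P = y0 \/ vhi P = y0].
Proof.
move=> wf [eP eP'] [eR eR'] le QR lt; case: o => /= hQ hP.
  by case: (QR true x y hQ); move: hP; rewrite /= /has_hedge; lia.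
move: hP => [? ?]; have [[c|c] [c'|c']] := wf ltac:(lia) ltac:(lia); split => //; lia.
Qed.

(* Two vertical segments on one column, ending at the same height and pointing the same
   way, are nested. *)
Lemma vsegments_opposite Pj Pk Q1 Q2 x y0 y1 y2 :
  vcol Pj = x -> vcol Pk = x -> vlo Pj = y0 \/ vhi Pj = y0 -> vlo Pk = y0 \/ vhi Pk = y0 ->
  has_vedge Q1 x y1 -> has_vedge Pj x y1 -> edge_disjoint Q1 Pk ->
  has_vedge Q2 x y2 -> has_vedge Pk x y2 -> edge_disjoint Q2 Pj ->
  (vlo Pj = y0 /\ vhi Pk = y0) \/ (vhi Pj = y0 /\ vlo Pk = y0).
Proof.
move=> cj ck ej ek q1 p1 d1 q2 p2 d2.
case: ej => ej; case: ek => ek; [| by left | by right |].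
- have [h|h] : vhi Pj <= vhi Pk \/ vhi Pk < vhi Pj by lia.
    by case: (d1 false x y1 q1); move: p1; rewrite /= /has_vedge; lia.
  by case: (d2 false x y2 q2); move: p2; rewrite /= /has_vedge; lia.
- have [h|h] : vlo Pk <= vlo Pj \/ vlo Pj < vlo Pk by lia.
    by case: (d1 false x y1 q1); move: p1; rewrite /= /has_vedge; lia.
  by case: (d2 false x y2 q2); move: p2; rewrite /= /has_vedge; lia.
Qed.

Section RightEars.
Variables (Pi Pj Pk Q1 Q2 : bpath) (x0 y0 : int).
Hypotheses (wf_i : bpath_wf Pi) (wf_j : bpath_wf Pj) (wf_k : bpath_wf Pk).
Hypotheses (wf_1 : bpath_wf Q1) (wf_2 : bpath_wf Q2).
Hypotheses (ei : has_hedge Pi x0 y0) (ej : has_hedge Pj x0 y0) (ek : has_hedge Pk x0 y0).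
Hypotheses (s1i : share_right_of x0 Q1 Pi) (s1j : share_right_of x0 Q1 Pj).
Hypotheses (s2i : share_right_of x0 Q2 Pi) (s2k : share_right_of x0 Q2 Pk).
Hypotheses (d1k : edge_disjoint Q1 Pk) (d2j : edge_disjoint Q2 Pj) (d12 : edge_disjoint Q1 Q2).

Lemma right_ears_lt : hhi Pj < hhi Pk -> False.
Proof.
move=> ljk; case: ei ej ek => [? ?] [? ?] [? ?].
case: s1j => o1j [x1j [y1j [r1j q1j p1j]]].
have [? ? kj cj] := share_right_vedge wf_j ej ek (ltW ljk) d1k r1j q1j p1j; subst o1j x1j.
case: q1j p1j => /= [? ?] [? ?].
case: s1i => -[] [x1i [y1i [r1i [? ?] [? ?]]]].
  have [[c|c] _] := wf_1 ltac:(lia) ltac:(lia).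
    by case: (d1k (o := true) (x := hhi Pj) (y := y0)); rewrite /= /has_hedge; lia.
  by case: (d1k (o := true) (x := hhi Pj - 1) (y := y0)); rewrite /= /has_hedge; lia.
have [ci ci'] := wf_i ltac:(lia) ltac:(lia).
have lij : hhi Pi <= hhi Pj by lia.
case: s2i => o2i [x2i [y2i [r2i q2i p2i]]].
have [? ? _ _] := share_right_vedge wf_i ei ej lij d2j r2i q2i p2i; subst o2i x2i.
case: q2i p2i => /= [? ?] [? ?].
case: s2k => -[] [x2k [y2k [r2k q2k p2k]]]; last first.
  by case: q2k p2k => /= [? ?] [? ?]; have [[c|c] _] := wf_k ltac:(lia) ltac:(lia); lia.
have [hx|hx] : hhi Pj <= x2k \/ x2k < hhi Pj by lia.
  2: by case: (d2j q2k); move: p2k; rewrite /= /has_hedge; lia.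
case: q2k p2k => /= [? ?] [? ?].
have [c2 c2'] := wf_2 ltac:(lia) ltac:(lia).
case: ci' => ci'.
- have dj : vhi Pj = y0.
    case: cj => // cj.
    by case: (d2j (o := false) (x := hhi Pj) (y := y0)); rewrite /= /has_vedge; lia.
  by case: (d12 (o := false) (x := hhi Pj) (y := y0)); rewrite /= /has_vedge; lia.
- have dj : vlo Pj = y0.
    case: cj => // cj.
    by case: (d2j (o := false) (x := hhi Pj) (y := y0 - 1)); rewrite /= /has_vedge; lia.
  by case: (d12 (o := false) (x := hhi Pj) (y := y0 - 1)); rewrite /= /has_vedge; lia.
Qed.

Lemma right_ears_eq : hhi Pj = hhi Pk -> False.
Proof.
move=> ejk; have [ljk lkj] : hhi Pj <= hhi Pk /\ hhi Pk <= hhi Pj by lia.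
case: ei ej ek => [? ?] [? ?] [? ?].
case: s1j => o1j [x1j [y1j [r1j q1j p1j]]].
have [? ? kj cj] := share_right_vedge wf_j ej ek ljk d1k r1j q1j p1j; subst o1j x1j.
case: s2k => o2k [x2k [y2k [r2k q2k p2k]]].
have [? ? kk ck] := share_right_vedge wf_k ek ej lkj d2j r2k q2k p2k; subst o2k x2k.
rewrite -ejk in kk q2k p2k.
have opposite := vsegments_opposite kj kk cj ck q1j p1j d1k q2k p2k d2j.
case: q1j p1j q2k p2k => /= [? ?] [? ?] [? ?] [? ?].
case: s1i => -[] [x1i [y1i [r1i [? ?] [? ?]]]].
  have [hx|hx] : hhi Pj <= x1i \/ x1i < hhi Pj by lia.
    2: by case: (d1k (o := true) (x := x1i) (y := y1i)); rewrite /= /has_hedge; lia.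
  have [[c1|c1] _] := wf_1 ltac:(lia) ltac:(lia); last by lia.
  case: s2i => -[] [x2i [y2i [r2i [? ?] [? ?]]]].
    have [hx'|hx'] : hhi Pj <= x2i \/ x2i < hhi Pj by lia.
      2: by case: (d2j (o := true) (x := x2i) (y := y2i)); rewrite /= /has_hedge; lia.
    have [[c2|c2] _] := wf_2 ltac:(lia) ltac:(lia); last by lia.
    by case: (d12 (o := true) (x := hhi Pj) (y := y0)); rewrite /= /has_hedge; lia.
  by have [[ci|ci] _] := wf_i ltac:(lia) ltac:(lia); lia.
have [ci ci'] := wf_i ltac:(lia) ltac:(lia).
case: s2i => -[] [x2i [y2i [r2i [? ?] [? ?]]]].
  by case: (d2j (o := true) (x := x2i) (y := y2i)); rewrite /= /has_hedge; lia.
case: opposite => -[? ?]; case: ci' => ci'.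
- have [h|h] : vhi Pj <= y2i \/ y2i < vhi Pj by lia.
    by case: (d2j (o := false) (x := hhi Pj) (y := y0)); rewrite /= /has_vedge; lia.
  by case: (d2j (o := false) (x := hhi Pj) (y := y2i)); rewrite /= /has_vedge; lia.
- have [h|h] : y1i < vlo Pk \/ vlo Pk <= y1i by lia.
    by case: (d1k (o := false) (x := hhi Pj) (y := y0 - 1)); rewrite /= /has_vedge; lia.
  by case: (d1k (o := false) (x := hhi Pj) (y := y1i)); rewrite /= /has_vedge; lia.
- have [h|h] : vhi Pk <= y1i \/ y1i < vhi Pk by lia.
    by case: (d1k (o := false) (x := hhi Pj) (y := y0)); rewrite /= /has_vedge; lia.
  by case: (d1k (o := false) (x := hhi Pj) (y := y1i)); rewrite /= /has_vedge; lia.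
- have [h|h] : y2i < vlo Pj \/ vlo Pj <= y2i by lia.
    by case: (d2j (o := false) (x := hhi Pj) (y := y0 - 1)); rewrite /= /has_vedge; lia.
  by case: (d2j (o := false) (x := hhi Pj) (y := y2i)); rewrite /= /has_vedge; lia.
Qed.
End RightEars.

Lemma edge_disjoint_sym P Q : edge_disjoint P Q -> edge_disjoint Q P.
Proof. by move=> PQ o x y hQ hP; exact: PQ o x y hP hQ. Qed.

Lemma right_ears Pi Pj Pk Q1 Q2 x0 y0 :
  bpath_wf Pi -> bpath_wf Pj -> bpath_wf Pk -> bpath_wf Q1 -> bpath_wf Q2 ->
  has_hedge Pi x0 y0 -> has_hedge Pj x0 y0 -> has_hedge Pk x0 y0 ->
  share_right_of x0 Q1 Pi -> share_right_of x0 Q1 Pj -> edge_disjoint Q1 Pk ->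
  share_right_of x0 Q2 Pi -> share_right_of x0 Q2 Pk -> edge_disjoint Q2 Pj ->
  edge_disjoint Q1 Q2 -> False.
Proof.
move=> wi wj wk w1 w2 ei ej ek s1i s1j d1k s2i s2k d2j d12.
case: (ltgtP (hhi Pj) (hhi Pk)) => [lt|gt|eq].
- exact: (right_ears_lt wi wj wk w1 w2 ei ej ek s1i s1j s2i s2k d1k d2j d12 lt).
- exact: (right_ears_lt wi wk wj w2 w1 ei ek ej s2i s2k s1i s1j d2j d1k (edge_disjoint_sym d12) gt).
- exact: (right_ears_eq wi wj wk w1 w2 ei ej ek s1i s1j s2i s2k d1k d2j d12 eq).
Qed.

Definition reflect (P : bpath) : bpath :=
  BPath (hrow P) (- hhi P) (- hlo P) (- vcol P) (vlo P) (vhi P).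

(* Reflection [x |-> - x] of the plane, in terms of lower-left ends of unit edges. *)
Definition reflect_x (o : bool) (x : int) : int := if o then - x - 1 else - x.

Lemma has_edge_reflect P o x y : has_edge (reflect P) o (reflect_x o x) y <-> has_edge P o x y.
Proof. by case: o; rewrite /= /has_hedge /has_vedge /=; split; lia. Qed.

Lemma bpath_wf_reflect P : bpath_wf P -> bpath_wf (reflect P).
Proof. by rewrite /bpath_wf /= => wf h h'; have [] := wf ltac:(lia) h'; lia. Qed.

Lemma has_hedge_reflect P x y : has_hedge P x y -> has_hedge (reflect P) (- x - 1) y.
Proof. by rewrite /has_hedge /=; lia. Qed.

Lemma edge_disjoint_reflect P Q : edge_disjoint P Q -> edge_disjoint (reflect P) (reflect Q).
Proof.
move=> PQ o x y; have -> : x = reflect_x o (reflect_x o x) by case: o; rewrite /=; lia.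
by rewrite !has_edge_reflect; apply: PQ.
Qed.

Definition share_left_of (x0 : int) (Q P : bpath) : Prop :=
  exists o x y, [/\ x <= x0, has_edge Q o x y & has_edge P o x y].

(* The edge [(x0, y0)] itself is not shared by [Q], since [Q] avoids [R]. *)
Lemma share_left_reflect x0 y0 P R Q : has_hedge P x0 y0 -> has_hedge R x0 y0 ->
  edge_disjoint Q R -> share_left_of x0 Q P -> share_right_of (- x0 - 1) (reflect Q) (reflect P).
Proof.
move=> eP eR QR [o [x [y [le hQ hP]]]]; exists o, (reflect_x o x), y.
split; [case: o hQ hP => /= hQ hP; last by lia | exact/has_edge_reflect..].
have [ex|lt] : x = x0 \/ x < x0 by lia.
  by case: (QR true x y hQ); move: eP eR hP; rewrite /= /has_hedge ex; lia.
by lia.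
Qed.

Lemma left_ears Pi Pj Pk Q1 Q2 x0 y0 :
  bpath_wf Pi -> bpath_wf Pj -> bpath_wf Pk -> bpath_wf Q1 -> bpath_wf Q2 ->
  has_hedge Pi x0 y0 -> has_hedge Pj x0 y0 -> has_hedge Pk x0 y0 ->
  share_left_of x0 Q1 Pi -> share_left_of x0 Q1 Pj -> edge_disjoint Q1 Pk ->
  share_left_of x0 Q2 Pi -> share_left_of x0 Q2 Pk -> edge_disjoint Q2 Pj ->
  edge_disjoint Q1 Q2 -> False.
Proof.
move=> wi wj wk w1 w2 ei ej ek s1i s1j d1k s2i s2k d2j d12.
apply: (right_ears (bpath_wf_reflect wi) (bpath_wf_reflect wj) (bpath_wf_reflect wk)
  (bpath_wf_reflect w1) (bpath_wf_reflect w2)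
  (has_hedge_reflect ei) (has_hedge_reflect ej) (has_hedge_reflect ek)
  (share_left_reflect ei ek d1k s1i) (share_left_reflect ej ek d1k s1j) (edge_disjoint_reflect d1k)
  (share_left_reflect ei ej d2j s2i) (share_left_reflect ek ej d2j s2k) (edge_disjoint_reflect d2j)
  (edge_disjoint_reflect d12)).
Qed.

(* Otherwise a segment of [Q] would run through the edge [(x0, y0)]. *)
Lemma share_straddle_contra Q Pm Pn R x0 y0 om xm ym on xn yn :
  bpath_wf Q -> has_hedge Pm x0 y0 -> has_hedge Pn x0 y0 -> has_hedge R x0 y0 ->
  edge_disjoint Q R -> has_edge Q om xm ym -> has_edge Pm om xm ym ->
  has_edge Q on xn yn -> has_edge Pn on xn yn -> x0 < xm -> xn <= x0 -> False.
Proof.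
move=> wQ [? ?] [? ?] eR QR qm pm qn pn rm ln.
have QR0 : ~ has_hedge Q x0 y0 by move=> hQ; apply: (QR true x0 y0 hQ eR).
case: om qm pm => /= -[? ?] [? ?]; case: on qn pn => /= -[? ?] [? ?].
- by apply: QR0; split; lia.
- by have [[c|c] _] := wQ ltac:(lia) ltac:(lia); [apply: QR0; split|]; lia.
- by have [[c|c] _] := wQ ltac:(lia) ltac:(lia); [|apply: QR0; split]; lia.
- by lia.
Qed.

Lemma share_same_side Q Pm Pn R x0 y0 :
  bpath_wf Q -> has_hedge Pm x0 y0 -> has_hedge Pn x0 y0 -> has_hedge R x0 y0 ->
  edge_disjoint Q R -> share_edge Q Pm -> share_edge Q Pn ->
  (share_right_of x0 Q Pm /\ share_right_of x0 Q Pn) \/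
  (share_left_of x0 Q Pm /\ share_left_of x0 Q Pn).
Proof.
move=> wQ em en eR QR [om [xm [ym [qm pm]]]] [on [xn [yn [qn pn]]]].
case: (ltP x0 xm) => rm; case: (ltP x0 xn) => rn.
- by left; split; [exists om, xm, ym | exists on, xn, yn].
- by case: (share_straddle_contra wQ em en eR QR qm pm qn pn rm rn).
- by case: (share_straddle_contra wQ en em eR QR qn pn qm pm rn rm).
- by right; split; [exists om, xm, ym | exists on, xn, yn].
Qed.

(* Two of the ears meet their paths on the same side of the edge, and any two ears have
   a path in common. *)
Lemma common_hedge_no_ears P1 P2 P3 Q12 Q23 Q13 x0 y0 :
  bpath_wf P1 -> bpath_wf P2 -> bpath_wf P3 ->
  bpath_wf Q12 -> bpath_wf Q23 -> bpath_wf Q13 ->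
  has_hedge P1 x0 y0 -> has_hedge P2 x0 y0 -> has_hedge P3 x0 y0 ->
  share_edge Q12 P1 -> share_edge Q12 P2 -> edge_disjoint Q12 P3 ->
  share_edge Q23 P2 -> share_edge Q23 P3 -> edge_disjoint Q23 P1 ->
  share_edge Q13 P1 -> share_edge Q13 P3 -> edge_disjoint Q13 P2 ->
  edge_disjoint Q12 Q23 -> edge_disjoint Q12 Q13 -> edge_disjoint Q13 Q23 -> False.
Proof.
move=> w1 w2 w3 wa wb wc e1 e2 e3 a1 a2 a3 b2 b3 b1 c1 c3 c2 dab dac dcb.
have dbc := edge_disjoint_sym dcb.
case: (share_same_side wa e1 e2 e3 a3 a1 a2) => -[ra1 ra2];
case: (share_same_side wb e2 e3 e1 b1 b2 b3) => -[rb2 rb3];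
case: (share_same_side wc e1 e3 e2 c2 c1 c3) => -[rc1 rc3].
- exact: (right_ears w1 w2 w3 wa wc e1 e2 e3 ra1 ra2 a3 rc1 rc3 c2 dac).
- exact: (right_ears w2 w1 w3 wa wb e2 e1 e3 ra2 ra1 a3 rb2 rb3 b1 dab).
- exact: (right_ears w1 w2 w3 wa wc e1 e2 e3 ra1 ra2 a3 rc1 rc3 c2 dac).
- exact: (left_ears w3 w2 w1 wb wc e3 e2 e1 rb3 rb2 b1 rc3 rc1 c2 dbc).
- exact: (right_ears w3 w2 w1 wb wc e3 e2 e1 rb3 rb2 b1 rc3 rc1 c2 dbc).
- exact: (left_ears w1 w2 w3 wa wc e1 e2 e3 ra1 ra2 a3 rc1 rc3 c2 dac).
- exact: (left_ears w2 w1 w3 wa wb e2 e1 e3 ra2 ra1 a3 rb2 rb3 b1 dab).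
- exact: (left_ears w1 w2 w3 wa wc e1 e2 e3 ra1 ra2 a3 rc1 rc3 c2 dac).
Qed.

Lemma ears_claw P1 P2 P3 Q12 Q23 Q13 :
  bpath_wf P1 -> bpath_wf P2 -> bpath_wf P3 ->
  bpath_wf Q12 -> bpath_wf Q23 -> bpath_wf Q13 ->
  share_edge P1 P2 -> share_edge P1 P3 -> share_edge P2 P3 ->
  share_edge Q12 P1 -> share_edge Q12 P2 -> edge_disjoint Q12 P3 ->
  share_edge Q23 P2 -> share_edge Q23 P3 -> edge_disjoint Q23 P1 ->
  share_edge Q13 P1 -> share_edge Q13 P3 -> edge_disjoint Q13 P2 ->
  edge_disjoint Q12 Q23 -> edge_disjoint Q12 Q13 -> edge_disjoint Q13 Q23 -> claw3 P1 P2 P3.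
Proof.
move=> w1 w2 w3 wa wb wc s12 s13 s23 a1 a2 a3 b2 b3 b1 c1 c3 c2 dab dac dcb.
case: (pairwise_share_common_or_claw w1 w2 w3 s12 s13 s23) => // -[[] [x [y [e1 e2 e3]]]].
  by case: (common_hedge_no_ears w1 w2 w3 wa wb wc e1 e2 e3 a1 a2 a3 b2 b3 b1 c1 c3 c2 dab dac dcb).
have T := bpath_wf_transpose; have S := share_edge_transpose; have D := edge_disjoint_transpose.
by case: (common_hedge_no_ears (T _ w1) (T _ w2) (T _ w3) (T _ wa) (T _ wb) (T _ wc)
  (x0 := y) (y0 := x) e1 e2 e3 (S _ _ a1) (S _ _ a2) (D _ _ a3) (S _ _ b2) (S _ _ b3) (D _ _ b1)
  (S _ _ c1) (S _ _ c3) (D _ _ c2) (D _ _ dab) (D _ _ dac) (D _ _ dcb)).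
Qed.

(** * Grid paths *)

Definition seg_lo (d : dir) (c m : int) : int :=
  match d with West | South => c - m | East | North => c end.
Definition seg_hi (d : dir) (c m : int) : int :=
  match d with West | South => c | East | North => c + m end.

(* The path leaving [p] with [m1] steps towards [d1], then [m2] steps towards [d2]. *)
Definition bpath_of (p : point) (d1 : dir) (m1 : int) (d2 : dir) (m2 : int) : bpath :=
  match d1 with
  | East => BPath p.2 p.1 (p.1 + m1) (p.1 + m1) (seg_lo d2 p.2 m2) (seg_hi d2 p.2 m2)
  | West => BPath p.2 (p.1 - m1) p.1 (p.1 - m1) (seg_lo d2 p.2 m2) (seg_hi d2 p.2 m2)
  | North => BPath (p.2 + m1) (seg_lo d2 p.1 m2) (seg_hi d2 p.1 m2) p.1 p.2 (p.2 + m1)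
  | South => BPath (p.2 - m1) (seg_lo d2 p.1 m2) (seg_hi d2 p.1 m2) p.1 (p.2 - m1) p.2
  end.

Lemma bpath_of_wf p d1 m1 d2 m2 : bpath_wf (bpath_of p d1 m1 d2 m2).
Proof. by case: d1; case: d2; rewrite /bpath_wf /= => *; lia. Qed.

Lemma bpath_of_empty p d1 d2 o x y : ~ has_edge (bpath_of p d1 0 d2 0) o x y.
Proof.
by case: p => ? ?; case: o; case: d1; case: d2; rewrite /= /has_hedge /has_vedge /=; lia.
Qed.

(* [o], [x], [y] encode the unit edge [{a, b}] as in [has_edge]. *)
Definition unit_edge (o : bool) (x y : int) (a b : point) : Prop :=
  if o then a.2 = y /\ b.2 = y /\ (a.1 = x /\ b.1 = x + 1 \/ b.1 = x /\ a.1 = x + 1)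
  else a.1 = x /\ b.1 = x /\ (a.2 = y /\ b.2 = y + 1 \/ b.2 = y /\ a.2 = y + 1).

Definition bpath_edge (P : bpath) (a b : point) : Prop :=
  exists o x y, unit_edge o x y a b /\ has_edge P o x y.

Definition represents (s : seq point) (P : bpath) : Prop :=
  forall a b, uses_edge s a b <-> bpath_edge P a b.

Lemma unit_edge_inj o x y o' x' y' a b :
  unit_edge o x y a b -> unit_edge o' x' y' a b -> [/\ o = o', x = x' & y = y'].
Proof. by case: o; case: o'; rewrite /unit_edge => h h'; split => //; lia. Qed.

Lemma unit_edge_stepP a b p d :
  unit_edge (dir_horizontal d) (dir_x p d) (dir_y p d) a b <->
  a = p /\ b = step p d \/ b = p /\ a = step p d.
Proof.
case: p a b => px py [ax ay] [bx b_y].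
by case: d; rewrite /= !pair_equal_spec /unit_edge /=; split; lia.
Qed.

Lemma uses_edge_cons2 p0 p1 t a b : uses_edge [:: p0, p1 & t] a b =
  [|| (a, b) == (p0, p1), (b, a) == (p0, p1) | uses_edge (p1 :: t) a b].
Proof. by rewrite /uses_edge /= !in_cons -!orbA; congr (_ || _); rewrite orbCA. Qed.

Lemma represents_single p P : (forall o x y, ~ has_edge P o x y) -> represents [:: p] P.
Proof. by move=> P0 a b; split=> // -[o [x [y [_ /P0]]]]. Qed.

Lemma represents_cons p d t P P' :
  (forall o x y, has_edge P o x y <->
     (o = dir_horizontal d /\ x = dir_x p d /\ y = dir_y p d) \/ has_edge P' o x y) ->
  represents (step p d :: t) P' -> represents [:: p, step p d & t] P.
Proof.
move=> EP R a b; rewrite uses_edge_cons2; split.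
  case/or3P => [/eqP [-> ->] | /eqP [-> ->] | /R [o [x [y [ue hP']]]]].
  - exists (dir_horizontal d), (dir_x p d), (dir_y p d).
    by split; [apply/unit_edge_stepP; left | apply/EP; left].
  - exists (dir_horizontal d), (dir_x p d), (dir_y p d).
    by split; [apply/unit_edge_stepP; right | apply/EP; left].
  - by exists o, x, y; split => //; apply/EP; right.
move=> [o [x [y [ue /EP [[eo [ex ey]] | hP']]]]].
  by move: ue; rewrite eo ex ey => /unit_edge_stepP [] [-> ->]; rewrite eqxx ?orbT.
by apply/or3P; apply: Or33; apply/R; exists o, x, y.
Qed.

Lemma has_edge_bpath_of_straight p d1 m1 d2 m2 o x y : 0 <= m1 ->
  has_edge (bpath_of p d1 (m1 + 1) d2 m2) o x y <->
  (o = dir_horizontal d1 /\ x = dir_x p d1 /\ y = dir_y p d1) \/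
  has_edge (bpath_of (step p d1) d1 m1 d2 m2) o x y.
Proof.
case: p => px py m1_ge0.
by case: o; case: d1; case: d2; rewrite /= /has_hedge /has_vedge /=; split; lia.
Qed.

Lemma has_edge_bpath_of_bend p d d1 m1 d2 o x y : 0 <= m1 ->
  dir_horizontal d != dir_horizontal d1 ->
  has_edge (bpath_of p d 1 d1 m1) o x y <->
  (o = dir_horizontal d /\ x = dir_x p d /\ y = dir_y p d) \/
  has_edge (bpath_of (step p d) d1 m1 d2 0) o x y.
Proof.
case: p => px py m1_ge0.
by case: o; case: d; case: d1 => //= _; case: d2; rewrite /= /has_hedge /has_vedge /=; split; lia.
Qed.

Lemma grid_adj_stepP p q : grid_adj p q -> exists d, q = step p d.
Proof.
case: p q => px py [qx qy]; rewrite /grid_adj /= => /eqP h.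
have : (qx = px + 1 /\ qy = py \/ qx = px - 1 /\ qy = py) \/
       (qx = px /\ qy = py + 1 \/ qx = px /\ qy = py - 1) by lia.
by case=> -[] [-> ->]; [exists East | exists West | exists North | exists South].
Qed.

Lemma horizontal_step p d : horizontal p (step p d) = dir_horizontal d.
Proof. by case: p => px py; case: d; rewrite /horizontal /= ?eqxx //; apply/negbTE/eqP; lia. Qed.

Lemma dir_horizontal_eq d d' : dir_horizontal d = dir_horizontal d' ->
  d = d' \/ forall p, step (step p d) d' = p.
Proof.
case: d; case: d' => //= _; try by left.
all: by right=> -[x y]; rewrite /=; apply/pair_equal_spec; lia.
Qed.

Lemma bends_cons3 p p1 p2 t :
  bends [:: p, p1, p2 & t] = ((horizontal p p1 != horizontal p1 p2) + bends [:: p1, p2 & t])%N.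
Proof. by []. Qed.

(* The first direction and the bend count are carried along for the induction. *)
Lemma grid_path_shape p t :
  uniq (p :: t) -> all (fun pq => grid_adj pq.1 pq.2) (zip (p :: t) t) -> (0 < size t)%N ->
  (bends (p :: t) <= 1)%N ->
  exists d1 d2 (m1 m2 : int), [/\ 0 < m1 /\ 0 <= m2, dir_horizontal d1 != dir_horizontal d2,
    head p t = step p d1, bends (p :: t) = (m2 != 0)
    & represents (p :: t) (bpath_of p d1 m1 d2 m2)].
Proof.
elim: t p => [|p1 t IH] p // uniq_t adj_t _ bends_t.
have /grid_adj_stepP [d ?] : grid_adj p p1 by case/andP: adj_t.
subst p1.
case: t IH uniq_t adj_t bends_t => [|p2 t] IH uniq_t adj_t bends_t.
  exists d, (if dir_horizontal d then North else East), 1, 0.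
  split=> //; first by case: (dir_horizontal d).
  apply: represents_cons (fun o x y => has_edge_bpath_of_straight p d _ _ o x y (lexx 0)) _.
  exact/represents_single/bpath_of_empty.
have [/andP [_ uniq_t'] /andP [_ adj_t']] := (uniq_t, adj_t).
have bends_t' : (bends [:: step p d, p2 & t] <= 1)%N.
  by rewrite (leq_trans _ bends_t) // bends_cons3 leq_addl.
have [d1 [d2 [m1 [m2 [[m1_gt0 m2_ge0] d12 /= hp2] bends_eq R]]]] :=
  IH _ uniq_t' adj_t' isT bends_t'.
subst p2.
rewrite bends_cons3 bends_eq !horizontal_step in bends_t *.
have [/eqP hdd | hdd] := boolP (dir_horizontal d == dir_horizontal d1).
  case: (dir_horizontal_eq hdd) => [ed | back]; last first.
    by move: uniq_t; rewrite /= back !inE eqxx orbT.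
  subst d1; exists d, d2, (m1 + 1), m2; split=> //; first by lia.
  by apply: represents_cons R => o x y; apply: has_edge_bpath_of_straight; lia.
have m2_0 : m2 = 0 by move: bends_t; rewrite hdd; case: (m2 =P 0).
subst m2; exists d, d1, 1, m1; rewrite hdd /=; split=> //; first by lia.
  by case: (m1 =P 0) => //; lia.
by apply: represents_cons R => o x y; apply: has_edge_bpath_of_bend; lia.
Qed.

Lemma B1_path_bpath s : grid_path s -> (bends s <= 1)%N -> exists P, bpath_wf P /\ represents s P.
Proof.
case: s => [|p t] /and3P [size_t uniq_t adj_t] bends_t //.
have [d1 [d2 [m1 [m2 [_ _ _ _ R]]]]] := grid_path_shape uniq_t adj_t size_t bends_t.
by exists (bpath_of p d1 m1 d2 m2); split; first exact: bpath_of_wf.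
Qed.

Lemma represents_share s t P Q : represents s P -> represents t Q ->
  (exists a b, uses_edge s a b && uses_edge t a b) <-> share_edge P Q.
Proof.
move=> RP RQ; split.
  move=> [a [b /andP [/RP [o [x [y [ue hP]]]] /RQ [o' [x' [y' [ue' hQ]]]]]]].
  by have [? ? ?] := unit_edge_inj ue ue'; subst o' x' y'; exists o, x, y.
move=> [o [x [y [hP hQ]]]]; exists (x, y), (if o then (x + 1, y) else (x, y + 1)).
have ue : unit_edge o x y (x, y) (if o then (x + 1, y) else (x, y + 1)).
  by case: o {hP hQ}; rewrite /unit_edge /=; lia.
by apply/andP; split; [apply/RP | apply/RQ]; exists o, x, y.
Qed.

Lemma step_inj c : injective (step c).
Proof. by case: c => x y; do 2 case=> //=; move/pair_equal_spec; lia. Qed.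

Lemma grid_adj_step c d : grid_adj c (step c d).
Proof. by case: c => x y; case: d; rewrite /grid_adj /=; lia. Qed.

Lemma uses_dir_edge s P c d : represents s P -> uses_dir P c d -> uses_edge s c (step c d).
Proof.
move=> R h; apply/R; exists (dir_horizontal d), (dir_x c d), (dir_y c d).
by split=> //; apply/unit_edge_stepP; left.
Qed.

Lemma claw_member_uses s P c m :
  represents s P -> claw_member P c m -> uses_two_claw_edges c (step c m) s.
Proof.
move=> R [d1 [d2 [d12 d1m d2m u1 u2]]]; exists (step c d1), (step c d2).
rewrite !grid_adj_step !(uses_dir_edge R) //= andbT.
by apply/and3P; split; apply/eqP => /step_inj.
Qed.

Section B1EPG.
Variables (T : finType) (e : rel T) (rep : T -> seq point).
Hypotheses (e_irr : irreflexive e) (rep_B1 : B1_EPG_rep e rep).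

Lemma rep_bpath x : exists P, bpath_wf P /\ represents (rep x) P.
Proof. by have [path_x bends_x] := rep_B1.1 x; apply: B1_path_bpath. Qed.

Lemma rep_adj x y P Q : represents (rep x) P -> represents (rep y) Q ->
  e x y -> share_edge P Q.
Proof.
move=> Rx Ry exy; have xy : x != y by apply: contraTneq exy => ->; rewrite e_irr.
by apply/(represents_share Rx Ry)/(rep_B1.2 x y xy).
Qed.

Lemma rep_nonadj x y P Q : represents (rep x) P -> represents (rep y) Q ->
  x != y -> ~~ e x y -> edge_disjoint P Q.
Proof.
move=> Rx Ry xy /negP nexy o a b hP hQ; apply/nexy/(rep_B1.2 x y xy).
by apply/(represents_share Rx Ry); exists o, a, b.
Qed.

Lemma rep_claw u v w Pu Pv Pw :
  represents (rep u) Pu -> represents (rep v) Pv -> represents (rep w) Pw ->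
  claw3 Pu Pv Pw -> claw_clique3 (rep u) (rep v) (rep w).
Proof.
move=> Ru Rv Rw [c [m [hu hv hw]]]; exists c, (step c m).
by split; [apply: grid_adj_step | split; apply: claw_member_uses].
Qed.

Lemma ear_triangle_claw u v w y1 y2 y3 :
  ear_triangle e u v w y1 y2 y3 -> claw_clique3 (rep u) (rep v) (rep w).
Proof.
case=> -[euv evw euw] [e1u e1v n1w y1w] [e2v e2w n2u y2u] [e3u e3w n3v y3v].
case/and3P=> n12 n13 n23.
have y12 : y1 != y2 by apply: contraNneq n1w => ->.
have y13 : y1 != y3 by apply: contraNneq n1w => ->.
have y23 : y2 != y3 by apply: contraNneq n2u => ->.
have [Pu [wu Ru]] := rep_bpath u; have [Pv [wv Rv]] := rep_bpath v.
have [Pw [ww Rw]] := rep_bpath w; have [Q1 [w1 R1]] := rep_bpath y1.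
have [Q2 [w2 R2]] := rep_bpath y2; have [Q3 [w3 R3]] := rep_bpath y3.
apply: (rep_claw Ru Rv Rw); apply: (ears_claw wu wv ww w1 w2 w3).
- exact: rep_adj Ru Rv euv.
- exact: rep_adj Ru Rw euw.
- exact: rep_adj Rv Rw evw.
- exact: rep_adj R1 Ru e1u.
- exact: rep_adj R1 Rv e1v.
- exact: rep_nonadj R1 Rw y1w n1w.
- exact: rep_adj R2 Rv e2v.
- exact: rep_adj R2 Rw e2w.
- exact: rep_nonadj R2 Ru y2u n2u.
- exact: rep_adj R3 Ru e3u.
- exact: rep_adj R3 Rw e3w.
- exact: rep_nonadj R3 Rv y3v n3v.
- exact: rep_nonadj R1 R2 y12 n12.
- exact: rep_nonadj R1 R3 y13 n13.
- exact/edge_disjoint_sym/(rep_nonadj R2 R3 y23 n23).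
Qed.

End B1EPG.

Theorem corollary4p11 (T : finType) (e : rel T) :
  simple_graph e -> maximal_outerplanar e ->
  forall rep : T -> seq point, B1_EPG_rep e rep ->
  forall u v w : T, reduced_triangle e u v w ->
  claw_clique3 (rep u) (rep v) (rep w).
Proof.
move=> [e_sym e_irr] [e_outer _] rep rep_B1 u v w uvw.
have [y1 [y2 [y3 ears]]] := reduced_triangle_ears e_sym e_irr e_outer uvw.
exact (ear_triangle_claw e_irr rep_B1 ears).
Qed.
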